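(* The approximation ratio $\frac{13}{15}$ of the $\alpha$-pass algorithm for the clique inference problem with nonnegative vertex potentials and Potts clique potential $C(\mathbf{v})=\lambda\sum_{v}n_v(\mathbf{v})^2$, $\lambda>0$, is tight: there is a family of such instances (with $\lambda=1$, indexed by the number of vertices $n$) for which the ratio $F(\hat{\mathbf{v}})/F(\mathbf{v}^* )$ between the score of the assignment $\hat{\mathbf{v}}$ returned by $\alpha$-pass and the optimal score tends to $\frac{13}{15}$ as $n\to\infty$.
   Context: Clique inference problem: there are $n$ vertices $1,\dots,n$, a finite set $V$ of values, real vertex potentials $\psi_{jv}$ ($1\le j\le n$, $v\in V$), and a clique potential $C$ depending only on the counts $n_v(\mathbf{v})=|\{j:v_j=v\}|$. The objective is $F(\mathbf{v})=\sum_{j=1}^n\psi_{jv_j}+C(\mathbf{v})$ over $\mathbf{v}\in V^n$; $\mathbf{v}^*$ is a maximizer. The $\alpha$-pass algorithm: for each $\alpha\in V$, sort the vertices in decreasing order of $\psi_{j\alpha}-\max_{v\neq\alpha}\psi_{jv}$; for each $k\in\{1,\dots,n\}$ form the assignment giving the first $k$ sorted vertices the value $\alpha$ and every other vertex a value $v\ne\alpha$ maximizing $\psi_{jv}$; output the formed assignment with the largest $F$ over all $\alpha$ and $k$. *)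

From HB Require Import structures.
From mathcomp Require Import all_boot all_order all_algebra.
From mathcomp Require Import all_classical all_reals all_analysis.
From mathcomp Require Import fingroup perm.
Set Implicit Arguments. Unset Strict Implicit. Unset Printing Implicit Defensive.
Import Order.TTheory GRing.Theory Num.Theory.
Local Open Scope ring_scope.

Section CliqueInference.
Variables (R : realType) (n m : nat).
Variable psi : 'I_n -> 'I_m -> R.

Definition nval (v : {ffun 'I_n -> 'I_m}) (a : 'I_m) : nat := #|[set j | v j == a]|.

Definition potts_F (lam : R) (v : {ffun 'I_n -> 'I_m}) : R :=
  \sum_(j < n) psi j (v j) + lam * \sum_(a < m) ((nval v a)%:R ^+ 2).

Definition is_optimal (lam : R) (v : {ffun 'I_n -> 'I_m}) : Prop :=
  forall w : {ffun 'I_n -> 'I_m}, potts_F lam w <= potts_F lam v.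

(* the quantity by which vertices are sorted in the alpha-pass:
   psi_{j alpha} - max_{v <> alpha} psi_{j v};  b alpha j is the chosen
   maximizer v <> alpha of psi_{j v} (tie-breaking is part of the run). *)
Definition best_other (b : 'I_m -> 'I_n -> 'I_m) : Prop :=
  forall (a : 'I_m) (j : 'I_n), b a j != a /\
    forall v : 'I_m, v != a -> psi j v <= psi j (b a j).

(* sigma a is the sorted order of the vertices for alpha = a: position p holds
   vertex sigma a p, in decreasing order of psi_{j a} - psi_{j (b a j)}. *)
Definition sorted_order (b : 'I_m -> 'I_n -> 'I_m) (sigma : 'I_m -> {perm 'I_n}) : Prop :=
  forall (a : 'I_m) (p q : 'I_n), (p <= q)%N ->
    psi (sigma a q) a - psi (sigma a q) (b a (sigma a q))
      <= psi (sigma a p) a - psi (sigma a p) (b a (sigma a p)).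

Definition formed (b : 'I_m -> 'I_n -> 'I_m) (sigma : 'I_m -> {perm 'I_n})
  (a : 'I_m) (k : nat) : {ffun 'I_n -> 'I_m} :=
  [ffun j => if ((((sigma a)^-1)%g j : 'I_n) < k)%N then a else b a j].

(* vhat is a possible output of the alpha-pass algorithm (for some valid
   tie-breaking): it is one of the formed assignments (alpha in V, 1 <= k <= n)
   with the largest F among all of them. *)
Definition alpha_pass_output (lam : R) (vhat : {ffun 'I_n -> 'I_m}) : Prop :=
  exists (b : 'I_m -> 'I_n -> 'I_m) (sigma : 'I_m -> {perm 'I_n}),
    [/\ best_other b, sorted_order b sigma,
        (exists (a : 'I_m) (k : nat), [/\ (1 <= k)%N, (k <= n)%N & vhat = formed b sigma a k])
      & forall (a : 'I_m) (k : nat), (1 <= k)%N -> (k <= n)%N ->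
          potts_F lam (formed b sigma a k) <= potts_F lam vhat].

End CliqueInference.

From HB Require Import structures.
From mathcomp Require Import all_boot all_order all_algebra.
From mathcomp Require Import all_classical all_reals all_analysis.
From mathcomp Require Import fingroup perm.
Import Order.TTheory GRing.Theory Num.Theory.
Import numFieldNormedType.Exports.
From mathcomp Require Import zify ring lra.
Set Implicit Arguments. Unset Strict Implicit. Unset Printing Implicit Defensive.

(* Take 3s vertices in three groups of size s; vertex j has potential 4s+1 on a
   value private to it and 4s on a value shared by its group.  Putting every
   group on its shared value scores 15 s^2, and no assignment scores more than
   15 s^2 + 3s.  The alpha-pass, however, only forms assignments in which each
   vertex takes alpha or its best value other than alpha, which is its private
   value unless that value is alpha; so every value but alpha is taken at most
   once and the score is at most 13 s^2 + 5s, while alpha = the shared value of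
   the first group with k = 3s already reaches 13 s^2. *)

Lemma sum_nat_divn (f : nat -> nat) q s : 0 < s ->
  \sum_(0 <= j < q * s) f (j %/ s) = \sum_(0 <= i < q) s * f i.
Proof.
move=> s_gt0; elim: q => [|q IHq]; first by rewrite mul0n !big_geq.
rewrite mulSn addnC (big_cat_nat _ (n := q * s)) ?leq_addr //= IHq big_nat_recr //=.
congr (_ + _); rewrite -[in RHS](addKn (q * s) s) -sum_nat_const_nat.
apply: eq_big_nat => j /andP [le_qs_j lt_j]; congr f.
by rewrite -(subnKC le_qs_j) divnMDl // divn_small ?addn0 // ltn_subLR.
Qed.

Lemma sum_nval n m (v : {ffun 'I_n -> 'I_m}) : \sum_a nval v a = n.
Proof.
rewrite -[RHS]card_ord -sum1_card (partition_big v predT) //=.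
by apply: eq_bigr => a _; rewrite /nval -sum1_card; apply: eq_bigl => j; rewrite inE.
Qed.

Lemma nval_le n m (v : {ffun 'I_n -> 'I_m}) a : nval v a <= n.
Proof. by rewrite /nval -[X in _ <= X]card_ord max_card. Qed.

Lemma sum_nval_sq n m (v : {ffun 'I_n -> 'I_m}) :
  \sum_a nval v a ^ 2 = \sum_j nval v (v j).
Proof.
rewrite (partition_big v predT) //=; apply: eq_bigr => a _.
rewrite (eq_bigr (fun _ => nval v a)); last by move=> j /eqP ->.
by rewrite sum_nat_const /nval cardsE.
Qed.

Definition potts_Fn (phi : nat -> nat -> nat) n m (v : {ffun 'I_n -> 'I_m}) : nat :=
  \sum_(j < n) phi j (v j) + \sum_(a < m) nval v a ^ 2.

Definition value_score (phi : nat -> nat -> nat) n m (v : {ffun 'I_n -> 'I_m}) a : nat :=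
  nval v a ^ 2 + \sum_(j | v j == a) phi j a.

Lemma potts_Fn_by_value phi n m (v : {ffun 'I_n -> 'I_m}) :
  potts_Fn phi v = \sum_a value_score phi v a.
Proof.
rewrite /potts_Fn big_split /= addnC; congr (_ + _).
by rewrite (partition_big v predT) //=; apply: eq_bigr => a _; apply: eq_bigr => j /eqP ->.
Qed.

Lemma sum_class_le (phi : nat -> nat -> nat) n m (v : {ffun 'I_n -> 'I_m}) (a : 'I_m) c :
  (forall j : 'I_n, phi j a <= c) -> \sum_(j | v j == a) phi j a <= c * nval v a.
Proof.
move=> phi_le; apply: (@leq_trans (\sum_(j | v j == a) c)); first exact: leq_sum.
by rewrite sum_nat_const /nval cardsE mulnC.
Qed.

Lemma sum_class_le_column (phi : nat -> nat -> nat) n m (v : {ffun 'I_n -> 'I_m}) (a : 'I_m) :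
  \sum_(j | v j == a) phi j a <= \sum_(j < n) phi j a.
Proof. by rewrite [X in _ <= X](bigID (fun j => v j == a)) leq_addr. Qed.

Section TightInstance.
Variable s : nat.
Hypothesis s_gt0 : 0 < s.

(* Values 0 .. 3s-1 are private to the vertices, 3s + q is shared by the
   group q of vertices j with j %/ s = q. *)
Definition tpsi (j a : nat) : nat :=
  (4 * s + 1) * (a == j) + 4 * s * (a == 3 * s + j %/ s).

Definition runner_up (a j : nat) : nat := if a == j then 3 * s + j %/ s else j.

Lemma tpsi_le j a : j < 3 * s -> tpsi j a <= 4 * s + 1.
Proof.
move=> lt_j; rewrite /tpsi; move: (j %/ s) => q.
by case: (a =P j) => [->|_]; case: (_ =P _) => /=; lia.
Qed.

Lemma column_tpsi a : \sum_(j < 3 * s) tpsi j a =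
  (4 * s + 1) * (a < 3 * s) + 4 * s * (s * (3 * s <= a < 3 * s + 3)).
Proof.
rewrite -(big_mkord xpredT (tpsi ^~ a)) big_split /= -!big_distrr /=.
congr (_ * _ + _ * _).
  elim: (3 * s) => [|k IHk]; first by rewrite big_geq.
  by rewrite big_nat_recr //= IHk ltnS leq_eqVlt; case: eqP => /=; lia.
rewrite (sum_nat_divn (fun i => a == 3 * s + i)) // !big_nat_recr //= big_geq //.
by case: eqP; case: eqP; case: eqP; lia.
Qed.

Lemma sum_class_tpsi_le_card m (v : {ffun 'I_(3 * s) -> 'I_m}) a :
  \sum_(j | v j == a) tpsi j a <= (4 * s + 1) * nval v a.
Proof. by apply: sum_class_le => j; apply: tpsi_le. Qed.

Lemma sum_class_tpsi_le m (v : {ffun 'I_(3 * s) -> 'I_m}) a :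
  \sum_(j | v j == a) tpsi j a <= (4 * s + 1) * s.
Proof.
apply: leq_trans; first exact: sum_class_le_column.
by rewrite column_tpsi; case: ltnP => /= [_|]; nia.
Qed.

Lemma value_score_le m (v : {ffun 'I_(3 * s) -> 'I_m}) a :
  value_score tpsi v a <= (5 * s + 1) * nval v a.
Proof.
have := sum_class_tpsi_le_card v a; have := sum_class_tpsi_le v a.
have := nval_le v a; rewrite /value_score.
move: (\sum_(j | _) _) (nval v a) => x t; case: (leqP t s); nia.
Qed.

Lemma potts_Fn_tpsi_le m (v : {ffun 'I_(3 * s) -> 'I_m}) :
  potts_Fn tpsi v <= 15 * s ^ 2 + 3 * s.
Proof.
rewrite potts_Fn_by_value; apply: (@leq_trans (\sum_a (5 * s + 1) * nval v a)).
  by apply: leq_sum => a _; apply: value_score_le.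
by rewrite -big_distrr /= sum_nval; nia.
Qed.

Lemma runner_up_inj a j1 j2 : j1 < 3 * s -> j2 < 3 * s ->
  runner_up a j1 = runner_up a j2 -> j1 = j2.
Proof.
rewrite /runner_up; move: (j1 %/ s) (j2 %/ s) => q1 q2.
by case: (a =P j1); case: (a =P j2); lia.
Qed.

Lemma runner_up_lt a j : j < 3 * s -> runner_up a j < 3 * s + 3.
Proof.
rewrite /runner_up; case: eqP => _ lt_j; last by rewrite ltn_addr.
by rewrite ltn_add2l ltn_divLR // mulnC.
Qed.

Lemma runner_up_neq a j : j < 3 * s -> runner_up a j != a.
Proof. by rewrite /runner_up; move: (j %/ s) => q; case: (a =P j); lia. Qed.

Lemma tpsi_runner_up_argmax a j x : j < 3 * s -> x != a ->
  tpsi j (runner_up a j) <= tpsi j x -> x = runner_up a j.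
Proof.
rewrite /tpsi /runner_up; move: (j %/ s) => q.
case: (a =P j); case: (x =P j); case: (x =P 3 * s + q); lia.
Qed.

Section RunnerUpAssignment.
Variables (m : nat) (v : {ffun 'I_(3 * s) -> 'I_m}) (a : 'I_m).
Hypothesis v_runner_up : forall j, v j = a \/ (v j : nat) = runner_up a j.

Lemma nval_runner_up_le1 c : c != a -> nval v c <= 1.
Proof.
move=> c_neq_a; apply/card_le1_eqP => j1 j2; rewrite !inE => /eqP v_j1 /eqP v_j2.
have [v1a|v1r] := v_runner_up j1; first by rewrite -v_j1 v1a eqxx in c_neq_a.
have [v2a|v2r] := v_runner_up j2; first by rewrite -v_j2 v2a eqxx in c_neq_a.
apply: ord_inj; apply: (@runner_up_inj a _ _ (ltn_ord j2) (ltn_ord j1)).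
by rewrite -v2r -v1r v_j1 v_j2.
Qed.

Lemma potts_Fn_runner_up_le : potts_Fn tpsi v <= 13 * s ^ 2 + 5 * s.
Proof.
have other_le c : c != a -> value_score tpsi v c <= (4 * s + 2) * nval v c.
  move=> c_neq_a; have := sum_class_tpsi_le_card v c.
  have := nval_runner_up_le1 c_neq_a; rewrite /value_score.
  move: (\sum_(j | _) _) (nval v c) => x t; nia.
have count_others : nval v a + \sum_(c | c != a) nval v c = 3 * s.
  by move: (sum_nval v); rewrite (bigD1 a).
rewrite potts_Fn_by_value (bigD1 a) //=.
apply: (@leq_trans (value_score tpsi v a + (4 * s + 2) * \sum_(c | c != a) nval v c)).
  by rewrite leq_add2l big_distrr leq_sum.
have := sum_class_tpsi_le_card v a; have := sum_class_tpsi_le v a.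
move: count_others; rewrite /value_score.
move: (\sum_(j | _) _) (\sum_(c | _) _) (nval v a) => x r t; case: (leqP t s); nia.
Qed.

End RunnerUpAssignment.

Lemma potts_Fn_tpsi_const m (v : {ffun 'I_(3 * s) -> 'I_m}) (c : 'I_m) :
  c = 3 * s :> nat -> (forall j, v j = c) -> potts_Fn tpsi v = 13 * s ^ 2.
Proof.
move=> c_val v_c; rewrite /potts_Fn sum_nval_sq.
have nval_c : nval v c = 3 * s.
  by rewrite /nval -[RHS]card_ord; apply: eq_card => j; rewrite inE v_c eqxx.
rewrite [X in X + _](eq_bigr (fun j : 'I_(3 * s) => tpsi j (3 * s))) => [|j _];
  last by rewrite v_c c_val.
rewrite [X in _ + X](eq_bigr (fun => 3 * s)) => [|j _]; last by rewrite v_c nval_c.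
have lt_3s : 3 * s < 3 * s + 3 by rewrite -[X in X < _]addn0 ltn_add2l.
by rewrite column_tpsi ltnn leqnn lt_3s sum_nat_const card_ord; nia.
Qed.

Lemma potts_Fn_tpsi_grouped m (w : {ffun 'I_(3 * s) -> 'I_m}) :
  (forall j, w j = 3 * s + j %/ s :> nat) -> potts_Fn tpsi w = 15 * s ^ 2.
Proof.
move=> w_group; rewrite /potts_Fn sum_nval_sq.
have tpsi_group (j : 'I_(3 * s)) : tpsi j (w j) = 4 * s.
  rewrite /tpsi w_group eqxx; case: eqP => [E|_]; last by rewrite muln0 muln1.
  by have := ltn_ord j; rewrite -E ltnNge leq_addr.
have nval_group (j : 'I_(3 * s)) : nval w (w j) = s.
  rewrite /nval cardsE -sum1_card big_mkcond /=.
  rewrite (eq_bigr (fun i : 'I_(3 * s) => (i %/ s == j %/ s) : nat)) => [|i _]; last first.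
    by rewrite unfold_in /= !w_group -[eqn _ _]/(_ == _) eqn_add2l; case: eqP.
  rewrite -(big_mkord xpredT (fun i => (i %/ s == j %/ s) : nat)).
  rewrite (sum_nat_divn (fun i => (i == j %/ s) : nat)) //.
  have : j %/ s < 3 by rewrite ltn_divLR // mulnC.
  case: (j %/ s) => [|[|[|q]]] // _; rewrite !big_nat_recr //= big_geq //; nia.
rewrite [X in X + _](eq_bigr (fun => 4 * s)) => [|j _]; last exact: tpsi_group.
rewrite [X in _ + X](eq_bigr (fun => s)) => [|j _]; last exact: nval_group.
rewrite !sum_nat_const card_ord; nia.
Qed.

End TightInstance.

Local Open Scope ring_scope.

Lemma potts_F_natE (R : realType) (phi : nat -> nat -> nat) n m (v : {ffun 'I_n -> 'I_m}) :
  potts_F (fun j a => (phi j a)%:R : R) 1 v = (potts_Fn phi v)%:R.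
Proof.
rewrite /potts_F /potts_Fn mul1r natrD !natr_sum.
by congr (_ + _); apply: eq_bigr => a _; rewrite natrX.
Qed.

Section TightInstanceReal.
Variables (R : realType) (s m : nat).
Hypotheses (s_gt0 : (0 < s)%N) (m_large : (3 * s + 3 <= m)%N).

Let psi (j : 'I_(3 * s)) (a : 'I_m) : R := (tpsi s j a)%:R.

Lemma best_other_tpsiE b : best_other psi b -> forall a j, b a j = runner_up s a j :> nat.
Proof.
move=> b_best a j; have [b_neq_a b_max] := b_best a j.
have lt_m : (runner_up s a j < m)%N.
  exact: leq_trans (runner_up_lt s_gt0 _ (ltn_ord j)) m_large.
apply: tpsi_runner_up_argmax => //.
rewrite -(ler_nat R); apply: (b_max (Ordinal lt_m)).
by rewrite -val_eqE /= runner_up_neq.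
Qed.

Lemma alpha_pass_potts_Fn_bounds vhat : alpha_pass_output psi 1 vhat ->
  (13 * s ^ 2 <= potts_Fn (tpsi s) vhat <= 13 * s ^ 2 + 5 * s)%N.
Proof.
case=> b [sigma] [b_best _ [a] [k] [_ _ ->] formed_max]; apply/andP; split.
  have lt_m : (3 * s < m)%N by lia.
  have n_gt0 : (0 < 3 * s)%N by rewrite muln_gt0.
  have := formed_max (Ordinal lt_m) (3 * s) n_gt0 (leqnn _).
  rewrite !potts_F_natE ler_nat; apply: leq_trans.
  by rewrite (potts_Fn_tpsi_const s_gt0 (c := Ordinal lt_m)) // => j; rewrite ffunE ltn_ord.
apply: (potts_Fn_runner_up_le s_gt0 (a := a)) => j; rewrite ffunE.
by case: ifP => _; [left | right; apply: best_other_tpsiE].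
Qed.

Lemma optimal_potts_Fn_bounds vstar : is_optimal psi 1 vstar ->
  (15 * s ^ 2 <= potts_Fn (tpsi s) vstar <= 15 * s ^ 2 + 3 * s)%N.
Proof.
move=> vstar_opt; rewrite potts_Fn_tpsi_le // andbT.
have lt_m (j : 'I_(3 * s)) : (3 * s + j %/ s < m)%N.
  by apply: leq_trans m_large; rewrite ltn_add2l ltn_divLR // mulnC.
have := vstar_opt [ffun j => Ordinal (lt_m j)].
rewrite !potts_F_natE ler_nat; apply: leq_trans.
by rewrite (potts_Fn_tpsi_grouped s_gt0) // => j; rewrite ffunE.
Qed.

End TightInstanceReal.

Lemma dist_ratio_le_inv (R : realFieldType) (x y z : R) : 1 <= z ->
  13 * z ^+ 2 <= x <= 13 * z ^+ 2 + 5 * z ->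
  15 * z ^+ 2 <= y <= 15 * z ^+ 2 + 3 * z -> `|13 / 15 - x / y| <= z^-1.
Proof.
move=> z_ge1 /andP [x_ge x_le] /andP [y_ge y_le].
have z_gt0 : 0 < z by lra.
have y_gt0 : 0 < 15 * y by nra.
have -> : 13 / 15 - x / y = (13 * y - 15 * x) / (15 * y) by field; lra.
rewrite normrM normfV (gtr0_norm y_gt0) ler_pdivrMr // ler_pdivlMl //.
have num_le : `|13 * y - 15 * x| <= 75 * z by rewrite ler_norml; apply/andP; split; nra.
by apply: le_trans (ler_wpM2l (ltW z_gt0) num_le) _; nra.
Qed.

Local Open Scope classical_set_scope.

Lemma ratio_cvg_13_15 (R : realType) (A B : nat -> nat) :
  (forall k, 13 * k.+1 ^ 2 <= A k <= 13 * k.+1 ^ 2 + 5 * k.+1)%N ->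
  (forall k, 15 * k.+1 ^ 2 <= B k <= 15 * k.+1 ^ 2 + 3 * k.+1)%N ->
  (fun k => (A k)%:R / (B k)%:R : R) @ \oo --> (13 / 15 : R).
Proof.
move=> A_bounds B_bounds; apply/cvgrPdist_le => e e_gt0; near=> k.
apply: (@le_trans _ _ k.+1%:R^-1); last first.
  by apply/ltW; near: k; exact: near_infty_natSinv_lt (PosNum e_gt0).
apply: dist_ratio_le_inv; first by rewrite ler1n.
  by move: (A_bounds k); rewrite -!(ler_nat R) !natrD !natrM -expr2.
by move: (B_bounds k); rewrite -!(ler_nat R) !natrD !natrM -expr2.
Unshelve. all: end_near.
Qed.

Theorem theorem5 (R : realType) :
  exists (N M : nat -> nat) (psi : forall k : nat, 'I_(N k) -> 'I_(M k) -> R),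
    [/\ (forall k, (1 <= N k)%N /\ (k <= N k)%N),
        (forall k, (2 <= M k)%N),
        (forall k j a, 0 <= psi k j a)
      & forall (vhat vstar : forall k : nat, {ffun 'I_(N k) -> 'I_(M k)}),
          (forall k, alpha_pass_output (psi k) 1 (vhat k)) ->
          (forall k, is_optimal (psi k) 1 (vstar k)) ->
          (fun k => potts_F (psi k) 1 (vhat k) / potts_F (psi k) 1 (vstar k))
            @ \oo --> (13 / 15 : R)].
Proof.
exists (fun k => 3 * k.+1)%N, (fun k => 3 * k.+1 + 3)%N.
exists (fun k j a => (tpsi k.+1 j a)%:R); split => //.
- by move=> k; split; lia.
- by move=> k; rewrite ltn_addl.
move=> vhat vstar vhat_alpha vstar_opt.
under eq_fun do rewrite !potts_F_natE.
apply: ratio_cvg_13_15 => k.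
  exact: alpha_pass_potts_Fn_bounds (vhat_alpha k).
exact: optimal_potts_Fn_bounds (vstar_opt k).
Qed.
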